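(* Let $p\in(1,2]$ and let $Y_1,Y_2,\dots$ be i.i.d. real random variables with $\nu_p:=\mathbb{E}|Y_k|^p<\infty$ and mean $y:=\mathbb{E}[Y_k]$. For a constant $c>0$ and $n\ge1$ define $$\hat Y_n:=\frac{c}{n^{1-1/p}}\sum_{k=1}^n\psi_p\!\left(\frac{Y_k}{c\,n^{1/p}}\right).$$ Then for all $\epsilon>0$, $$\mathbb{P}\left(\hat Y_n>y+\epsilon\right)\le\exp\left(-\frac{n^{(p-1)/p}\epsilon}{c}+\frac{b_p\nu_p}{c^p}\right),\qquad \mathbb{P}\left(y>\hat Y_n+\epsilon\right)\le\exp\left(-\frac{n^{(p-1)/p}\epsilon}{c}+\frac{b_p\nu_p}{c^p}\right).$$
   Context: $b_p:=\left[2\left(\frac{2-p}{p-1}\right)^{1-\frac{2}{p}}+\left(\frac{2-p}{p-1}\right)^{2-\frac{2}{p}}\right]^{-p/2}$ (with $0^0=1$ when $p=2$). The influence function is $\psi_p(x):=\ln\left(b_p|x|^p+x+1\right)$ for $x\ge0$ and $\psi_p(x):=-\ln\left(b_p|x|^p-x+1\right)$ for $x<0$. *)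

From HB Require Import structures.
From mathcomp Require Import all_boot all_order all_algebra.
From mathcomp Require Import all_classical all_reals all_analysis.
Set Implicit Arguments. Unset Strict Implicit. Unset Printing Implicit Defensive.
Import Order.TTheory GRing.Theory Num.Theory.
Import numFieldNormedType.Exports.
Local Open Scope classical_set_scope.
Local Open Scope ring_scope.

(* b_p, with powR satisfying 0 `^ 0 = 1 (so the convention 0^0 = 1 holds). *)
Definition b_const {R : realType} (p : R) : R :=
  let q := (2 - p) / (p - 1) in
  (2 * q `^ (1 - 2 / p) + q `^ (2 - 2 / p)) `^ (- (p / 2)).

Definition psi {R : realType} (p : R) (x : R) : R :=
  if 0 <= x then ln (b_const p * `|x| `^ p + x + 1)
  else - ln (b_const p * `|x| `^ p - x + 1).

Definition mutually_independent {R : realType} {d : measure_display}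
  {T : measurableType d} (P : probability T R) (Y : nat -> {RV P >-> R}) : Prop :=
  forall (J : seq nat) (B : nat -> set R), uniq J ->
    (forall j, measurable (B j)) ->
    P (\bigcap_(j in [set j | j \in J]) (Y j @^-1` B j)) =
    (\prod_(j <- J) P (Y j @^-1` B j))%E.

Definition identically_distributed {R : realType} {d : measure_display}
  {T : measurableType d} (P : probability T R) (Y : nat -> {RV P >-> R}) : Prop :=
  forall (k : nat) (B : set R), measurable B ->
    P (Y k @^-1` B) = P (Y 0%N @^-1` B).

(* the estimator hat Y_n, using Y_0, ..., Y_{n-1} (= the paper's Y_1..Y_n) *)
Definition Yhat {R : realType} {d : measure_display} {T : measurableType d}
  (P : probability T R) (Y : nat -> {RV P >-> R}) (p c : R) (n : nat) (w : T) : R :=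
  c / (n%:R `^ (1 - p^-1)) *
  \sum_(k < n) psi p (Y k w / (c * n%:R `^ (p^-1))).

From HB Require Import structures.
From mathcomp Require Import all_boot all_order all_algebra.
From mathcomp Require Import all_classical all_reals all_analysis.
From mathcomp Require Import measurable_realfun.
From mathcomp Require Import ring lra.
Import Order.TTheory GRing.Theory Num.Theory.
Import numFieldNormedType.Exports.
Local Open Scope classical_set_scope.
Local Open Scope ring_scope.

(* Write C := c n^{1/p} and N := n^{1-1/p}, so that
   Yhat_n = (c / N) sum_{k<n} psi_p(Y_k / C).  The proof is a Chernoff bound.
   1. Pointwise bounds (section PsiBounds).  The constant b_p is exactly what
      makes 1 + t^2 <= (1 + b_p t^p)^2 for t >= 0, an instance of the weighted
      AM-GM inequality (convexity of exp).  It follows that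
      exp(psi_p x) <= 1 + x + b_p |x|^p, and, psi_p being odd,
      exp(-psi_p x) <= 1 - x + b_p |x|^p.
   2. Independence (section IndependentProducts).  For independent Y_k and
      nonnegative measurable f with E f(Y_k) <= M for all k,
      E prod_{k<n} f(Y_k) <= M^n: for simple f by expanding the product over
      level sets, in general by monotone convergence.  Together with the
      exponential Markov inequality this is the Chernoff bound.
   3. The tail bound (section TailBound).  For s = 1 or s = -1, step 1 gives
      E exp(s psi_p(Y_k / C)) <= M := 1 + s y / C + b_p nu / C^p, hence
      P(s Yhat_n > s y + eps) <= exp(-N (s y + eps)/c) M^n
                               <= exp(-N eps / c + b_p nu / c^p). *)

Section PsiBounds.
Variable R : realType.
Implicit Types (p q t w x z : R).

(* Convexity of [expR] at the points (w-1)z and wz, whose w-mixture is 0. *)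
Lemma expR_mix_ge1 w z : 0 <= w -> w <= 1 ->
  1 <= w * expR ((w - 1) * z) + (1 - w) * expR (w * z).
Proof.
move=> w0 w1.
have := convex_expR (Itv01 w0 w1) ((w - 1) * z) (w * z).
rewrite !convRE /=.
have -> : w * ((w - 1) * z) + (1 - w) * (w * z) = 0 by ring.
by rewrite expR0.
Qed.

(* The weighted AM-GM inequality in the form used to bound b_p:
   when q w = 2 (1 - w), the weights 2 and q make the exponents cancel. *)
Lemma weighted_amgm_expR q w z : 0 < w <= 1 -> q * w = 2 * (1 - w) ->
  2 + q <= 2 * expR ((w - 1) * z) + q * expR (w * z).
Proof.
case/andP=> w0 w1 qw.
have mix := expR_mix_ge1 _ z (ltW w0) w1.
rewrite -(ler_pM2l w0).
have -> : w * (2 + q) = 2 * w + q * w by ring.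
have -> : w * (2 * expR ((w - 1) * z) + q * expR (w * z)) =
  2 * w * expR ((w - 1) * z) + (q * w) * expR (w * z) by ring.
rewrite qw; lra.
Qed.

Lemma b_const_ge0 p : 0 <= b_const p.
Proof. exact: powR_ge0. Qed.

(* At p = 2 (where 0^0 = 1 enters), b_2 = 1/2. *)
Lemma b_const2 : b_const (2 : R) = 2^-1.
Proof.
rewrite /b_const.
have -> : (2 - 2) / (2 - 1) = 0 :> R by rewrite subrr mul0r.
have -> : 1 - 2 / 2 = 0 :> R by rewrite divff ?subrr.
have -> : 2 - 2 / 2 = 1 :> R by rewrite divff //; lra.
rewrite powRr0 powR0 ?oner_neq0 // mulr1 addr0.
have -> : - (2 / 2) = -1 :> R by rewrite divff.
by rewrite powR_inv1.
Qed.

(* The defining property of b_p for 1 < p < 2: writing everything as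
   exponentials, the inequality becomes the weighted AM-GM inequality with
   q = (2-p)/(p-1) and w = 2 - 2/p. *)
Lemma b_const_sq_lt2 p t : 1 < p < 2 -> 0 < t ->
  t ^+ 2 <= 2 * (b_const p * t `^ p) + (b_const p * t `^ p) ^+ 2.
Proof.
case/andP=> p1 p2 t0; have p0 : 0 < p by lra.
have pN0 : p != 0 by rewrite gt_eqF.
rewrite /b_const; set q := (2 - p) / (p - 1); set w := 2 - 2 / p.
have q0 : 0 < q by rewrite divr_gt0 //; lra.
have w0 : 0 < w by rewrite subr_gt0 ltr_pdivrMr //; lra.
have w1 : w <= 1 by rewrite lerBlDr -lerBlDl ler_pdivlMr //; lra.
have qw : q * w = 2 * (1 - w).
  by rewrite /q /w; field; apply/andP; split; apply/negP=> /eqP; lra.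
have -> : 1 - 2 / p = w - 1 by rewrite /w; ring.
rewrite /powR (gt_eqF q0) (gt_eqF t0); set lq := ln q.
set Q := expR ((w - 1) * lq).
have Qq : expR (w * lq) = Q * q.
  by rewrite /Q -[in RHS](lnK q0) -expRD /lq; congr expR; ring.
rewrite Qq; set G := 2 * Q + Q * q.
have G0 : 0 < G by rewrite addr_gt0 // mulr_gt0 ?expR_gt0.
rewrite gt_eqF //.
(* With b_p t^p = exp rho, both sides are E Q times the two sides of the
   weighted AM-GM inequality at z = rho - ln q. *)
set rho := - (p / 2) * ln G + p * ln t.
rewrite -expRD -/rho.
set E := expR (2 / p * rho).
set A := expR ((w - 1) * (rho - lq)); set B := expR (w * (rho - lq)).
have h1 : expR rho = E * Q * A.
  by rewrite /E /A /Q -!expRD; congr expR; rewrite /w; field.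
have h2 : expR rho ^+ 2 = E * (Q * q) * B.
  rewrite -Qq /E /B -!expRD -expRM_natl; congr expR.
  by rewrite /w mulr_natl; field.
have h3 : t ^+ 2 = E * Q * (2 + q).
  have -> : E * Q * (2 + q) = E * G by rewrite /G; ring.
  rewrite -[t](lnK t0) -expRM_natl /E -[G](lnK G0) -expRD.
  by congr expR; rewrite /rho mulr_natl; field.
rewrite h2 h1 h3.
have -> : 2 * (E * Q * A) + E * (Q * q) * B = E * Q * (2 * A + q * B) by ring.
rewrite ler_pM2l ?mulr_gt0 ?expR_gt0 //.
by apply: weighted_amgm_expR; rewrite ?w0 ?w1.
Qed.

Lemma one_plus_sq_le p t : 1 < p <= 2 -> 0 <= t ->
  1 + t ^+ 2 <= (1 + b_const p * t `^ p) ^+ 2.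
Proof.
case/andP=> p1 p2 t0.
set u := b_const p * t `^ p.
have -> : (1 + u) ^+ 2 = 1 + (2 * u + u ^+ 2) by ring.
rewrite lerD2l.
move: t0; rewrite le_eqVlt => /predU1P[<-|t0].
  by rewrite expr0n addr_ge0 ?sqr_ge0 ?mulr_ge0 ?b_const_ge0 ?powR_ge0.
move: p2; rewrite le_eqVlt => /predU1P[p2|p2]; last first.
  by apply: b_const_sq_lt2 => //; apply/andP.
rewrite /u p2 b_const2 (powR_mulrn 2 (ltW t0)).
have := sqr_ge0 (2^-1 * t ^+ 2); lra.
Qed.

Lemma psiN p x : 0 < p -> psi p (- x) = - psi p x.
Proof.
move=> p0; rewrite /psi normrN oppr_ge0.
case: (ltgtP x 0) => [_|_|->]; rewrite ?opprK //.
by rewrite normr0 powR0 ?gt_eqF // mulr0 subr0 !add0r ln1 oppr0.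
Qed.

(* The key pointwise bound: exp(psi_p x) <= 1 + x + b_p |x|^p.  For x >= 0
   it is an equality; for x < 0 it amounts to (1 + u)^2 - x^2 >= 1 with
   u = b_p |x|^p, i.e. [one_plus_sq_le]. *)
Lemma expR_psi_le p x : 1 < p <= 2 ->
  expR (psi p x) <= 1 + x + b_const p * `|x| `^ p.
Proof.
move=> hp; rewrite /psi; set u := b_const p * `|x| `^ p.
have u0 : 0 <= u by rewrite mulr_ge0 ?b_const_ge0 ?powR_ge0.
case: ifPn => [x0|]; first by rewrite lnK ?posrE; lra.
rewrite -ltNge => xlt.
have := @one_plus_sq_le p `|x| hp (normr_ge0 x); rewrite -/u ltr0_norm // sqrrN => sq.
rewrite expRN lnK ?posrE; last by lra.
by rewrite -div1r ler_pdivrMr; [nra | lra].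
Qed.

Lemma expR_Npsi_le p x : 1 < p <= 2 ->
  expR (- psi p x) <= 1 - x + b_const p * `|x| `^ p.
Proof.
move=> hp; have p0 : 0 < p by case/andP: hp => p1 _; lra.
by rewrite -psiN // -(normrN x); exact: expR_psi_le.
Qed.

Lemma measurable_psi p : measurable_fun setT (psi p).
Proof.
have mpow : measurable_fun setT (fun x : R => b_const p * `|x| `^ p).
  apply: measurable_funM; first exact: measurable_cst.
  apply: (measurableT_comp (f := fun y : R => y `^ p) (g := fun y : R => `|y|)).
    exact: measurable_powR.
  exact: normr_measurable.
apply: measurable_fun_ifT.
- apply: (measurable_fun_ler (f := cst 0)); first exact: measurable_cst.
  exact: measurable_id.
- apply: measurableT_comp; first exact: measurable_ln.
  by apply: measurable_funD => //; apply: measurable_funD.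
- apply: measurable_funN; apply: measurableT_comp; first exact: measurable_ln.
  by apply: measurable_funD => //; apply: measurable_funB.
Qed.

End PsiBounds.

Section IndependentProducts.
Context {R : realType} {d : measure_display} {T : measurableType d}
  (P : probability T R).

Lemma integral_sum_indic (I : Type) (s : seq I) (v : I -> R) (B : I -> set T) :
  (forall i, 0 <= v i) -> (forall i, measurable (B i)) ->
  (\int[P]_w (\sum_(i <- s) v i * \1_(B i) w)%:E =
    (\sum_(i <- s) v i * fine (P (B i)))%:E)%E.
Proof.
move=> v0 mB.
under eq_integral do rewrite -sumEFin.
rewrite ge0_integral_sum //; last first.
- by move=> i x _; rewrite lee_fin mulr_ge0.
- move=> i; apply/measurable_EFinP; apply: measurable_funM.
    exact: measurable_cst.
  exact: measurable_indic.
rewrite -sumEFin; apply: eq_bigr => i _.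
under eq_integral do rewrite EFinM.
rewrite ge0_integralZl_EFin //.
- by rewrite integral_indic // setIT EFinM fineK //; exact: fin_num_measure.
- by apply/measurable_EFinP; exact: measurable_indic.
Qed.

Lemma prod_indic (n : nat) (X : 'I_n -> T -> R) (B : 'I_n -> set R) w :
  \prod_(k < n) \1_(B k) (X k w) = \1_([set w | forall k, B k (X k w)]) w :> R.
Proof.
have [allB|notallB] := pselect (forall k, B k (X k w)).
  rewrite indicE mem_set //; apply: big1 => k _.
  by rewrite indicE mem_set.
rewrite indicE memNset //.
have [k notBk] : exists k, ~ B k (X k w).
  by apply: contra_notP notallB => nex k; apply: contra_notP nex => ?; exists k.
by rewrite (bigD1 k) //= indicE memNset // mul0r.
Qed.

Lemma independent_events_prod (Y : nat -> {RV P >-> R})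
  (HI : mutually_independent Y) n (A : 'I_n -> set R) :
  (forall k, measurable (A k)) ->
  fine (P [set w | forall k : 'I_n, A k (Y k w)]) =
  \prod_(k < n) fine (P (Y k @^-1` A k)).
Proof.
move=> mA.
pose B j : set R := if (insub j : option 'I_n) is Some k then A k else setT.
have mB j : measurable (B j) by rewrite /B; case: insub.
have := HI (iota 0 n) B (iota_uniq 0 n) mB.
have -> : \bigcap_(j in [set j | j \in iota 0 n]) (Y j @^-1` B j) =
          [set w | forall k : 'I_n, A k (Y k w)].
  apply/seteqP; split => w /=.
  - move=> H k; have := H k; rewrite /= mem_iota /= add0n ltn_ord /B valK.
    by apply.
  - move=> H j; rewrite /= mem_iota add0n => /andP[_ jn].
    by rewrite /B (insubT (fun j => j < n)%N jn); exact: H.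
have -> : iota 0 n = index_iota 0 n by rewrite /index_iota subn0.
rewrite big_mkord => ->.
rewrite (eq_bigr (fun k : 'I_n => (fine (P (Y k @^-1` A k)))%:E)).
  by rewrite prodEFin.
move=> k _; rewrite /B valK fineK //.
by apply: fin_num_measure; exact: measurable_funPTI.
Qed.

(* For a nonnegative simple function h, the integral of h(X) and, for
   independent Y_k, the integral of prod_k h(Y_k), computed from the level
   sets A_i = h^-1{v_i}: the product is expanded into a sum over all maps
   f : 'I_n -> 'I_m and each term is split by independence. *)
Section SimpleFunctions.
Import HBNNSimple.
Variable (h : {nnsfun R >-> R}).
Let s := finmap.enum_fset (fset_set (range (h : R -> R))).
Let m := size s.
Let v (i : 'I_m) := s`_i.
Let A (i : 'I_m) := h @^-1` [set v i].

Let hE x : h x = \sum_(i < m) v i * \1_(A i) x.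
Proof. exact: fimfunEord. Qed.

Let v0 i : 0 <= v i.
Proof.
have : v i \in range h.
  by rewrite -(in_fset_set (fimfunP h)); exact: (mem_nth 0 (ltn_ord i)).
by rewrite inE => -[x _ <-]; exact: fun_ge0.
Qed.

Let mA i : measurable (A i).
Proof. exact: measurable_funPTI. Qed.

Lemma integral_simple_comp (X : {RV P >-> R}) :
  (\int[P]_w (h (X w))%:E =
   (\sum_(i < m) v i * fine (P (X @^-1` A i)))%:E)%E.
Proof.
under eq_integral do rewrite hE.
by rewrite -integral_sum_indic // => i; exact: measurable_funPTI.
Qed.

Lemma integral_prod_simple (Y : nat -> {RV P >-> R})
  (HI : mutually_independent Y) n :
  (\int[P]_w (\prod_(k < n) h (Y k w))%:E =
   (\prod_(k < n) \sum_(i < m) v i * fine (P (Y k @^-1` A i)))%:E)%E.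
Proof.
pose E (f : {ffun 'I_n -> 'I_m}) := [set w | forall k : 'I_n, A (f k) (Y k w)].
have indE (f : {ffun 'I_n -> 'I_m}) w :
    \prod_(k < n) \1_(A (f k)) (Y k w) = \1_(E f) w :> R.
  exact: (@prod_indic n (fun k : 'I_n => Y k) (fun k => A (f k))).
have expand w : \prod_(k < n) h (Y k w) =
    \sum_(f : {ffun 'I_n -> 'I_m}) (\prod_(k < n) v (f k)) * \1_(E f) w.
  under eq_bigr do rewrite hE.
  by rewrite bigA_distr_bigA /=; apply: eq_bigr => f _; rewrite big_split /= indE.
under eq_integral do rewrite expand.
rewrite integral_sum_indic //; last first.
- move=> f; apply/(measurable_indicP R).
  rewrite (_ : \1_(E f) = fun w => \prod_(k < n) \1_(A (f k)) (Y k w)).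
    apply: measurable_prod => k _.
    apply: measurableT_comp; first exact: measurable_indic.
    exact: measurable_funPT.
  by apply/funext => w; rewrite indE.
- by move=> f; apply: prodr_ge0 => k _.
congr EFin; rewrite bigA_distr_bigA /=; apply: eq_bigr => f _.
by rewrite (@independent_events_prod Y HI n (fun k => A (f k))) // big_split.
Qed.

End SimpleFunctions.

Import HBNNSimple.

(* The expectation of a product of nonnegative functions of independent
   variables is at most the product of the bounds on the factors: true for
   simple functions by [integral_prod_simple], then by monotone convergence
   along the canonical simple approximations of f. *)
Lemma integral_prod_le (Y : nat -> {RV P >-> R}) (HI : mutually_independent Y)
  n (f : R -> R) (M : R) : measurable_fun setT f -> (forall x, 0 <= f x) ->
  (forall k, (\int[P]_w (f (Y k w))%:E <= M%:E)%E) ->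
  (\int[P]_w (\prod_(k < n) f (Y k w))%:E <= (M ^+ n)%:E)%E.
Proof.
move=> mf f0 HM.
have mF : measurable_fun setT (EFin \o f) by apply/measurable_EFinP.
have F0 x : setT x -> (0 <= (EFin \o f) x)%E by move=> _; rewrite lee_fin.
pose h := nnsfun_approx measurableT mF.
have hle j x : h j x <= f x.
  have := @le_approx _ _ _ setT (EFin \o f) j x F0 I.
  by rewrite -(nnsfun_approxE measurableT mF) lee_fin.
have hnd x a b : (a <= b)%N -> h a x <= h b x.
  by move=> ab; have /lefP := nd_nnsfun_approx measurableT mF ab; apply.
have hcvg x : h j x @[j --> \oo] --> f x.
  by have /fine_cvgP[_] := cvg_nnsfun_approx measurableT mF F0 I (x := x).
pose g j w := (\prod_(k < n) h j (Y k w))%:E.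
have mg j : measurable_fun setT (g j).
  apply/measurable_EFinP; apply: measurable_prod => k _.
  by apply: measurableT_comp; exact: measurable_funPT.
have g0 j w : setT w -> (0 <= g j w)%E.
  by move=> _; rewrite lee_fin; apply: prodr_ge0 => k _; exact: fun_ge0.
have gnd w : setT w -> {homo g^~ w : a b / (a <= b)%N >-> (a <= b)%E}.
  move=> _ a b ab; rewrite lee_fin; apply: ler_prod => k _.
  by rewrite fun_ge0 hnd.
have glim w : limn (g ^~ w) = (\prod_(k < n) f (Y k w))%:E.
  apply: cvg_lim => //; apply/fine_cvgP; split; first exact: nearW.
  by apply: cvg_big => //; exact: mul_continuous.
have := cvg_monotone_convergence (mu := P) measurableT mg g0 gnd.
rewrite (eq_integral (fun w => (\prod_(k < n) f (Y k w))%:E)); last first.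
  by move=> w _; rewrite glim.
move=> Hc; rewrite -(cvg_lim _ Hc) //.
apply: lime_le; first by apply/cvg_ex; eexists; exact: Hc.
apply: nearW => j.
have -> : M ^+ n = \prod_(k < n) M by rewrite prodr_const card_ord.
rewrite /g integral_prod_simple // lee_fin.
apply: ler_prod => k _; rewrite -!lee_fin -integral_simple_comp.
apply/andP; split; first by apply: integral_ge0 => w _; rewrite lee_fin.
apply: le_trans (HM k); apply: ge0_le_integral => //.
- by move=> w _; rewrite lee_fin.
- by apply/measurable_EFinP; apply: measurableT_comp; exact: measurable_funPT.
- by apply/measurable_EFinP; apply: measurableT_comp => //; exact: measurable_funPT.
- by move=> w _; rewrite lee_fin.
Qed.

Lemma exp_markov (g : T -> R) (a : R) (A : set T) : measurable A ->
  measurable_fun setT g -> (forall w, A w -> a < g w) ->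
  (P A <= (expR (- a))%:E * \int[P]_w (expR (g w))%:E)%E.
Proof.
move=> mA mg Ag.
have mexpg : measurable_fun setT (fun w => expR (g w)).
  by apply: (measurableT_comp (f := expR)) => //; exact: measurable_expR.
have -> : ((expR (- a))%:E * \int[P]_w (expR (g w))%:E =
    \int[P]_w (expR (- a) * expR (g w))%:E)%E.
  under [RHS]eq_integral do rewrite EFinM.
  by rewrite ge0_integralZl_EFin ?expR_ge0 //; exact/measurable_EFinP.
have -> : P A = (\int[P]_w (\1_A w)%:E)%E by rewrite integral_indic // setIT.
apply: ge0_le_integral => //.
- by apply/measurable_EFinP; exact: measurable_indic.
- by apply/measurable_EFinP; apply: measurable_funM => //; exact: measurable_cst.
move=> w _; rewrite lee_fin -expRD indicE.
case: (boolP (w \in A)) => [wA|_] /=; last exact: expR_ge0.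
by have := Ag w (set_mem wA); have := expR_ge1Dx (- a + g w); lra.
Qed.

End IndependentProducts.

(* Identically distributed variables have the same integrals of nonnegative
   measurable functions (both are integrals against the common law). *)
Lemma integral_identically_distributed {R : realType} {d : measure_display}
  {T : measurableType d} (P : probability T R) (Y : nat -> {RV P >-> R})
  (HD : identically_distributed Y) (F : R -> \bar R) k :
  measurable_fun setT F -> (forall x, (0 <= F x)%E) ->
  (\int[P]_w F (Y k w) = \int[P]_w F (Y 0%N w))%E.
Proof.
move=> mF F0.
have h1 := ge0_integral_distribution (Y k) mF F0.
have h2 := ge0_integral_distribution (Y 0%N) mF F0.
rewrite /comp in h1 h2; rewrite -h1 -h2.
by apply: eq_measure_integral => A mA _; exact: HD.
Qed.

Section TailBound.
Context {R : realType} {d : measure_display} {T : measurableType d}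
  (P : probability T R) (Y : nat -> {RV P >-> R}).
Hypotheses (HI : mutually_independent Y) (HD : identically_distributed Y).
Variables (p c : R) (n : nat).
Hypotheses (hp : 1 < p <= 2) (c0 : 0 < c) (n0 : (0 < n)%N).
Hypothesis Hnu : (\int[P]_w ((`|Y 0%N w| `^ p)%:E) < +oo)%E.

Let nu := fine (\int[P]_w ((`|Y 0%N w| `^ p)%:E)).
Let y := fine ('E_P[Y 0%N]).
Let C := c * n%:R `^ p^-1.
Let N := n%:R `^ (1 - p^-1).

Let p1 : 1 < p. Proof. by case/andP: hp. Qed.
Let pN0 : p != 0. Proof. by rewrite gt_eqF // (lt_trans ltr01 p1). Qed.
Let n_gt0 : 0 < n%:R :> R. Proof. by rewrite ltr0n. Qed.
Let C0 : 0 < C. Proof. by rewrite mulr_gt0 // (powR_gt0 _ n_gt0). Qed.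
Let N0 : 0 < N. Proof. exact: powR_gt0 _ n_gt0. Qed.

Let NC : n%:R / C = N / c.
Proof.
have -> : n%:R = n%:R `^ p^-1 * N :> R.
  rewrite /N -powRD; last by rewrite implybE orbC (gt_eqF n_gt0).
  by rewrite addrC subrK powRr1 // ltW.
by rewrite /C; field; rewrite (gt_eqF c0) (gt_eqF (powR_gt0 _ n_gt0)).
Qed.

Let Cp : C `^ p = c `^ p * n%:R.
Proof.
rewrite /C powRM ?(ltW c0) ?powR_ge0 // -powRrM mulVf //.
by rewrite powRr1 // ltW.
Qed.

Let mabsY : measurable_fun setT (fun w => `|Y 0%N w| `^ p).
Proof.
apply: (measurableT_comp (f := fun x : R => `|x| `^ p)) => //.
exact: (measurableT_comp (f := fun x : R => x `^ p) (g := fun x : R => `|x|)).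
Qed.

Let int_absY : P.-integrable setT (EFin \o (fun w => `|Y 0%N w| `^ p)).
Proof.
apply/integrableP; split; first exact/measurable_EFinP.
rewrite (eq_integral (fun w => (`|Y 0%N w| `^ p)%:E)) //.
by move=> w _; rewrite /comp /= ger0_norm // powR_ge0.
Qed.

(* A finite p-th moment (p >= 1) gives a finite mean: |x| <= 1 + |x|^p. *)
Let int_Y : P.-integrable setT (EFin \o Y 0%N).
Proof.
apply: (@le_integrable _ _ _ P setT measurableT _
  (EFin \o (fun w => 1 + `|Y 0%N w| `^ p))) => //.
- exact/measurable_EFinP.
- move=> w _; rewrite /comp /= lee_fin (ger0_norm (x := 1 + _)); last first.
    by rewrite addr_ge0 // powR_ge0.
  have [le1|gt1] := lerP `|Y 0%N w| 1.
    by have := powR_ge0 `|Y 0%N w| p; lra.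
  have : `|Y 0%N w| `^ 1 <= `|Y 0%N w| `^ p by apply: ler_powR; apply: ltW.
  by rewrite powRr1 //; lra.
- rewrite (_ : EFin \o _ = (EFin \o cst 1) \+ (EFin \o (fun w => `|Y 0%N w| `^ p))) //.
  by apply: integrableD => //; exact: finite_measure_integrable_cst.
Qed.

Let EY : (\int[P]_w (Y 0%N w)%:E = y%:E)%E.
Proof.
have fin : (\int[P]_w (Y 0%N w)%:E)%E \is a fin_num by exact: integrable_fin_num.
by rewrite /y unlock fineK.
Qed.

Let Enu : (\int[P]_w ((`|Y 0%N w| `^ p)%:E) = nu%:E)%E.
Proof.
rewrite /nu fineK // ge0_fin_numE //.
by apply: integral_ge0 => w _; rewrite lee_fin powR_ge0.
Qed.

(* The bound on E exp(s psi_p(Y_k / C)) obtained from a pointwise bound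
   exp(s psi_p x) <= 1 + s x + b_p |x|^p (s = 1 or s = -1). *)
Let M s := 1 + s * y / C + b_const p * nu / C `^ p.

Let mgf s (x : R) := expR (s * psi p (x / C)).

Let measurable_mgf s : measurable_fun setT (mgf s).
Proof.
apply: (measurableT_comp (f := expR)); first exact: measurable_expR.
apply: measurable_funM; first exact: measurable_cst.
apply: (measurableT_comp (f := psi p)); first exact: measurable_psi.
by apply: measurable_funM => //; exact: measurable_cst.
Qed.

Lemma mgf_bound s :
  (forall x, expR (s * psi p x) <= 1 + s * x + b_const p * `|x| `^ p) ->
  (\int[P]_w (mgf s (Y 0%N w))%:E <= (M s)%:E)%E.
Proof.
move=> Hs.
pose g w := 1 + (s / C) * Y 0%N w + (b_const p / C `^ p) * `|Y 0%N w| `^ p.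
apply: (@le_trans _ _ (\int[P]_w (g w)%:E)%E).
  apply: ge0_le_integral => //.
  - by move=> w _; rewrite lee_fin expR_ge0.
  - by apply/measurable_EFinP; apply: measurableT_comp => //; exact: measurable_mgf.
  - apply/measurable_EFinP; apply: measurable_funD.
      apply: measurable_funD; first exact: measurable_cst.
      by apply: measurable_funM => //; exact: measurable_cst.
    by apply: measurable_funM => //; exact: measurable_cst.
  move=> w _; rewrite lee_fin; apply: le_trans (Hs _) _.
  have CVp : C^-1 `^ p = (C `^ p)^-1.
    by rewrite -powR_inv1 ?(ltW C0) // -powRrM mulN1r powRN.
  rewrite /g normrM normfV (gtr0_norm C0) powRM ?invr_ge0 ?(ltW C0) // CVp.
  by rewrite le_eqVlt; apply/orP; left; apply/eqP; ring.
rewrite (eq_integral (fun w => 1%:E + (s / C)%:E * (Y 0%N w)%:E +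
   (b_const p / C `^ p)%:E * (`|Y 0%N w| `^ p)%:E))%E; last first.
  by move=> w _; rewrite -!EFinM -!EFinD.
have i1 : P.-integrable setT (fun w : T => 1%:E) :=
  finite_measure_integrable_cst P 1 measurableT.
have i2 : P.-integrable setT (fun w => (s / C)%:E * (Y 0%N w)%:E)%E.
  exact: integrableZl.
have i3 : P.-integrable setT
    (fun w => (b_const p / C `^ p)%:E * (`|Y 0%N w| `^ p)%:E)%E.
  exact: integrableZl.
rewrite integralD //; last exact: integrableD.
rewrite integralD // integralZl // integralZl // EY Enu.
have -> : (\int[P]_w (1 : \bar R) = 1)%E.
  by rewrite integral_cst // mul1e; exact: probability_setT.
by rewrite -!EFinM -!EFinD lee_fin /M le_eqVlt; apply/orP; left; apply/eqP; ring.
Qed.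

(* n (M s - 1), the exponent produced by M^n <= exp(n (M - 1)). *)
Let exponentE s :
  n%:R * (M s - 1) = s * y * (N / c) + b_const p * nu / c `^ p.
Proof.
have e1 : n%:R * (s * y / C) = s * y * (N / c) by rewrite -NC; ring.
have e2 : n%:R * (b_const p * nu / C `^ p) = b_const p * nu / c `^ p.
  by rewrite Cp; field; rewrite (gt_eqF n_gt0) (gt_eqF (powR_gt0 _ c0)).
by rewrite /M -e1 -e2; ring.
Qed.

Let measurable_sum_psi :
  measurable_fun setT (fun w => \sum_(k < n) psi p (Y k w / C)).
Proof.
apply: measurable_sum => k.
apply: (measurableT_comp (f := psi p)); first exact: measurable_psi.
by apply: measurable_funM => //; exact: measurable_cst.
Qed.

(* One-sided tail bound for s * Yhat_n (s = 1 or s = -1): Chernoff's bound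
   with exponent a = N (s y + eps) / c, combined with
   E prod_k mgf s (Y_k) <= M^n <= exp(n (M - 1)). *)
Lemma tail_bound (s eps : R) : 0 < eps ->
  (forall x, expR (s * psi p x) <= 1 + s * x + b_const p * `|x| `^ p) ->
  (P [set w | (s * y + eps < s * Yhat Y p c n w)%R] <=
   (expR (- (n%:R `^ ((p - 1) / p) * eps / c) + b_const p * nu / c `^ p))%:E)%E.
Proof.
move=> eps0 Hs.
set A := [set w | _ < _].
have mA : measurable A.
  have msY : measurable_fun setT (fun w => s * Yhat Y p c n w).
    apply: measurable_funM; first exact: measurable_cst.
    by apply: measurable_funM; [exact: measurable_cst | exact: measurable_sum_psi].
  rewrite (_ : A = (fun w => s * Yhat Y p c n w) @^-1` `]s * y + eps, +oo[).
    by rewrite -[X in measurable X]setTI; apply: msY => //; exact: measurable_itv.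
  by apply/seteqP; split => w /=; rewrite in_itv /= andbT.
pose S w := s * \sum_(k < n) psi p (Y k w / C).
have mS : measurable_fun setT S.
  by apply: measurable_funM; [exact: measurable_cst | exact: measurable_sum_psi].
have AS w : A w -> N * (s * y + eps) / c < S w.
  rewrite /A /= => H; rewrite -(ltr_pM2l (divr_gt0 c0 N0)).
  have -> : c / N * (N * (s * y + eps) / c) = s * y + eps.
    by field; rewrite (gt_eqF c0) (gt_eqF N0).
  by rewrite /S mulrCA.
have SE w : expR (S w) = \prod_(k < n) mgf s (Y k w).
  by rewrite /S mulr_sumr expR_sum.
have Hprod : (\int[P]_w (expR (S w))%:E <= (M s ^+ n)%:E)%E.
  under eq_integral do rewrite SE.
  apply: integral_prod_le => //; first by move=> x; exact: expR_ge0.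
  move=> k; rewrite (@integral_identically_distributed _ _ _ P Y HD
    (EFin \o mgf s)) //; first exact: mgf_bound.
  - exact/measurable_EFinP.
  - by move=> x; rewrite lee_fin expR_ge0.
have M0 : 0 <= M s.
  rewrite -lee_fin; apply: le_trans (mgf_bound s Hs).
  by apply: integral_ge0 => w _; rewrite lee_fin expR_ge0.
have Mn : M s ^+ n <= expR (n%:R * (M s - 1)).
  rewrite expRM_natl; apply: lerXn2r; rewrite ?nnegrE ?expR_ge0 //.
  by have := expR_ge1Dx (M s - 1); lra.
have -> : - (n%:R `^ ((p - 1) / p) * eps / c) + b_const p * nu / c `^ p =
    - (N * (s * y + eps) / c) + n%:R * (M s - 1).
  rewrite exponentE /N (_ : (p - 1) / p = 1 - p^-1); first by ring.
  by field.
apply: le_trans (exp_markov P _ _ _ mA mS AS) _.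
rewrite expRD EFinM; apply: lee_wpmul2l; first by rewrite lee_fin expR_ge0.
by apply: le_trans Hprod _; rewrite lee_fin.
Qed.

End TailBound.

Theorem theorem2 (R : realType) (d : measure_display) (T : measurableType d)
  (P : probability T R) (Y : nat -> {RV P >-> R}) (p c : R) (n : nat)
  (eps : R) :
  1 < p -> p <= 2 ->
  mutually_independent Y -> identically_distributed Y ->
  (\int[P]_w ((`|Y 0%N w| `^ p)%:E) < +oo)%E ->
  0 < c -> (1 <= n)%N -> 0 < eps ->
  let nu := fine (\int[P]_w ((`|Y 0%N w| `^ p)%:E)) in
  let y := fine ('E_P[Y 0%N]) in
  let bound := expR (- (n%:R `^ ((p - 1) / p) * eps / c)
                     + b_const p * nu / c `^ p) in
  (P [set w | (y + eps < Yhat Y p c n w)%R] <= bound%:E)%E /\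
  (P [set w | (Yhat Y p c n w + eps < y)%R] <= bound%:E)%E.
Proof.
move=> p1 p2 HI HD Hnu c0 n1 eps0 nu y bound.
have hp : 1 < p <= 2 by apply/andP.
split.
-
  have -> : [set w | (y + eps < Yhat Y p c n w)%R] =
            [set w | (1 * y + eps < 1 * Yhat Y p c n w)%R].
    by apply/seteqP; split => w /=; rewrite !mul1r.
  by apply: tail_bound => // x; rewrite !mul1r; exact: expR_psi_le.
-
  have -> : [set w | (Yhat Y p c n w + eps < y)%R] =
            [set w | (-1 * y + eps < -1 * Yhat Y p c n w)%R].
    by apply/seteqP; split => w /=; rewrite !mulN1r => H; lra.
  by apply: tail_bound => // x; rewrite !mulN1r; exact: expR_Npsi_le.
Qed.
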